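(* Let $T=(T_{r,k})_{r,k\ge 0}$ be a number triangle with arithmetic sequences on all major and minor diagonals, i.e. there are integers $c_r$ ($r\ge 0$) and $b_k$ ($k\ge 0$) such that $T_{r,k}=T_{r,0}+kc_r$ and $T_{r,k}=T_{0,k}+rb_k$ for all $r,k\ge 0$. Then there exists $d\in\mathbb{Z}$ such that $d=c_r-c_{r-1}=b_k-b_{k-1}$ for all $r,k\ge 1$.
   Context: A number triangle is an array of integers $T_{r,k}$ indexed by integers $r,k\ge 0$, arranged so that row $n$ consists of entries with $r+k=n$. The $r$-th major diagonal is the sequence $(T_{r,k})_{k\ge 0}$ and the $k$-th minor diagonal is the sequence $(T_{r,k})_{r\ge 0}$. *)

(* integers Z. A number triangle is T : nat -> nat -> Z,
   T r k the entry with r + k = n in row n. *)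
From Stdlib Require Export ZArith.

(* Comparing the two ways of reaching T r k from the corner T 0 0 (first down
   the minor diagonal 0, then along the major diagonal r, or the other way
   round) gives r (b k - b 0) = k (c r - c 0).  Taking r = k = 1 shows
   b 1 - b 0 = c 1 - c 0 =: d; taking k = 1, resp. r = 1, then shows that c
   and b are arithmetic progressions of common difference d. *)
From Stdlib Require Import ZArith Lia.
Open Scope Z_scope.

Lemma arithmetic_succ_diff (u : nat -> Z) (d : Z) :
  (forall n : nat, u n = u 0%nat + Z.of_nat n * d) ->
  forall n : nat, (1 <= n)%nat -> d = u n - u (n - 1)%nat.
Proof.
  intros Hu [|n] Hn; [lia|].
  rewrite Nat.sub_succ, Nat.sub_0_r, (Hu (S n)), (Hu n), Nat2Z.inj_succ.
  ring.
Qed.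

Section ArithmeticDiagonals.

Variables (T : nat -> nat -> Z) (c b : nat -> Z).
Hypothesis Hmaj : forall r k : nat, T r k = T r 0%nat + Z.of_nat k * c r.
Hypothesis Hmin : forall r k : nat, T r k = T 0%nat k + Z.of_nat r * b k.

Lemma diagonal_increments r k :
  Z.of_nat r * (b k - b 0%nat) = Z.of_nat k * (c r - c 0%nat).
Proof.
  pose proof (Hmaj r k); pose proof (Hmin r k).
  pose proof (Hmin r 0); pose proof (Hmaj 0 k).
  lia.
Qed.

Lemma first_increments_eq : b 1%nat - b 0%nat = c 1%nat - c 0%nat.
Proof. pose proof (diagonal_increments 1 1); lia. Qed.

Lemma major_steps_arithmetic r :
  c r = c 0%nat + Z.of_nat r * (c 1%nat - c 0%nat).
Proof.
  pose proof (diagonal_increments r 1); rewrite first_increments_eq in *; lia.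
Qed.

Lemma minor_steps_arithmetic k :
  b k = b 0%nat + Z.of_nat k * (c 1%nat - c 0%nat).
Proof. pose proof (diagonal_increments 1 k); lia. Qed.

End ArithmeticDiagonals.

Theorem mainTheorem5 (T : nat -> nat -> Z) (c b : nat -> Z)
  (Hmaj : forall r k : nat, T r k = T r 0%nat + Z.of_nat k * c r)
  (Hmin : forall r k : nat, T r k = T 0%nat k + Z.of_nat r * b k) :
  exists d : Z,
    (forall r : nat, (1 <= r)%nat -> d = c r - c (r - 1)%nat) /\
    (forall k : nat, (1 <= k)%nat -> d = b k - b (k - 1)%nat).
Proof.
  exists (c 1%nat - c 0%nat); split; apply arithmetic_succ_diff.
  - exact (major_steps_arithmetic T c b Hmaj Hmin).
  - exact (minor_steps_arithmetic T c b Hmaj Hmin).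
Qed.
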